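(* For any boolean function $f:\{0,1\}^n\to\{0,1\}$, \[ Q_E^{na}(f)=\min_{x\in\{0,1\}^n}\max_{y\in S_f^\perp} d(x,y), \] i.e.\ $Q_E^{na}(f)$ equals the covering radius of the binary linear code $S_f^\perp$.
   Context: Addition of bit strings is in $\mathbb Z_2^n$ (bitwise mod 2). $S_f:=\{z\in\{0,1\}^n: f(x)=f(x+z)\ \text{for all } x\}$, a subspace of $\mathbb F_2^n$. For a subspace $S$, $S^\perp=\{x: x\cdot s=0 \text{ for all } s\in S\}$, with $x\cdot s=\sum_i x_is_i \bmod 2$. $d(x,y)$ is the Hamming distance. Nonadaptive exact quantum query model: let $\mathcal H_{\rm in}$ have orthonormal basis $|0\rangle,\dots,|n\rangle$ and let the oracle $O_x$ act by $|i\rangle\mapsto(-1)^{x_i}|i\rangle$ with convention $x_0=0$. A nonadaptive quantum algorithm making $k$ queries consists of an input-independent state $|\psi\rangle\in\mathcal H_{\rm in}^{\otimes k}\otimes\mathcal H_{\rm work}$ (with $\mathcal H_{\rm work}$ a finite-dimensional workspace), to which $O_x^{\otimes k}\otimes I$ is applied, followed by an input-independent two-outcome measurement with outcomes labelled $0,1$. It computes $f$ exactly if for every $x$ the outcome is $f(x)$ with probability $1$. $Q_E^{na}(f)$ is the minimum such $k$. *)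

From HB Require Import structures.
From mathcomp Require Import all_boot all_order all_algebra.
Set Implicit Arguments. Unset Strict Implicit. Unset Printing Implicit Defensive.
Import Order.TTheory GRing.Theory Num.Theory.

Definition bits (n : nat) := {ffun 'I_n -> bool}.

Definition badd n (x y : bits n) : bits n := [ffun i => x i (+) y i].

Definition bdot n (x s : bits n) : bool := odd (\sum_(i < n) (x i && s i)).

Definition hdist n (x y : bits n) : nat := #|[set i : 'I_n | x i != y i]|.

Definition Sf n (f : bits n -> bool) : {set bits n} :=
  [set z | [forall x, f x == f (badd x z)]].

Definition perp n (S : {set bits n}) : {set bits n} :=
  [set y | [forall s in S, ~~ bdot y s]].

(* All distances are <= n, so
   n is a neutral element for the minimum; the max over the (nonempty, it
   contains 0) set S^perp uses the nat \max with default 0. *)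
Definition minmax_dist n (S : {set bits n}) : nat :=
  \big[minn/n]_(x : bits n) \max_(y in perp S) hdist x y.

(* Query index i in {0,...,n} (basis |0>,...,|n> of H_in); convention x_0 = 0,
   and x_i (1 <= i <= n) is the (i-1)-th entry of x : bits n. *)
Definition xq n (x : bits n) (i : 'I_n.+1) : bool :=
  match unlift ord0 i with Some j => x j | None => false end.

(* Basis of H_in^{(x)k} (x) H_work, with dim H_work = w. *)
Definition basis (n k w : nat) := ({ffun 'I_k -> 'I_n.+1} * 'I_w)%type.

Local Open Scope ring_scope.

(* State after applying O_x^{(x)k} (x) I to psi. *)
Definition apply_oracle (C : numClosedFieldType) n k w (x : bits n)
    (psi : basis n k w -> C) : basis n k w -> C :=
  fun t => (-1) ^+ (\sum_(j < k) xq x (t.1 j))%N * psi t.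

Definition unit_state (C : numClosedFieldType) (T : finType) (psi : T -> C) :=
  \sum_(t : T) psi t * (psi t)^* = 1.

(* A two-outcome (projective) measurement {I - P, P}: P is an orthogonal
   projector (Hermitian and idempotent); outcome 1 corresponds to P. *)
Definition orth_projector (C : numClosedFieldType) (T : finType) (P : T -> T -> C) :=
  (forall a b, P a b = (P b a)^*) /\
  (forall a b, \sum_(c : T) P a c * P c b = P a b).

Definition prob1 (C : numClosedFieldType) (T : finType) (P : T -> T -> C) (phi : T -> C) : C :=
  \sum_(a : T) \sum_(b : T) (phi a)^* * P a b * phi b.

Definition na_exact (C : numClosedFieldType) n (f : bits n -> bool) (k : nat) : Prop :=
  exists (w : nat) (psi : basis n k w -> C) (P : basis n k w -> basis n k w -> C),
    unit_state psi /\ orth_projector P /\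
    forall x : bits n, prob1 P (apply_oracle x psi) = (f x)%:R.

(* A query string t (one index in {0..n} per query) contributes the oracle phase
   (-1)^(x . par t), where par t in F_2^n records the parity of the number of
   queries to each bit; k queries give parity vectors of weight at most k.
   - Lower bound: if inputs x, x + z disagree on f, exactness forces their oracle
     states to be orthogonal, so the Fourier transform of the distribution of
     par t vanishes off S_f.  By Fourier inversion that distribution is invariant
     under S_f^perp: its support contains a whole coset a + S_f^perp, whence
     every codeword lies within distance k of a.
   - Upper bound: with a a centre realizing the covering radius K, start in the
     uniform superposition of K-query strings whose parity vectors run over
     a + S_f^perp.  The oracle states are then orthonormal across the cosets of
     S_f and equal up to sign within a coset, so projecting onto the span of
     the states with f x = 1 computes f exactly. *)

From HB Require Import structures.
From mathcomp Require Import all_boot all_order all_algebra all_field.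
From mathcomp Require Import ring.
Set Implicit Arguments. Unset Strict Implicit. Unset Printing Implicit Defensive.
Import Order.TTheory GRing.Theory Num.Theory.

Definition bzero n : bits n := [ffun => false].
Definition delta n (i : 'I_n) : bits n := [ffun j => j == i].

Definition supp n (v : bits n) : {set 'I_n} := [set i | v i].

Definition subgroup n (H : {set bits n}) :=
  bzero n \in H /\ forall x y, x \in H -> y \in H -> badd x y \in H.

Section BinaryVectors.
Variable n : nat.
Implicit Types x y z s v : bits n.

Lemma baddC x y : badd x y = badd y x.
Proof. by apply/ffunP => i; rewrite !ffunE addbC. Qed.

Lemma baddA x y z : badd x (badd y z) = badd (badd x y) z.
Proof. by apply/ffunP => i; rewrite !ffunE addbA. Qed.

Lemma baddK x y : badd x (badd x y) = y.
Proof. by apply/ffunP => i; rewrite !ffunE addKb. Qed.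

Lemma badd0 x : badd x (bzero n) = x.
Proof. by apply/ffunP => i; rewrite !ffunE addbF. Qed.

Lemma baddxx x : badd x x = bzero n.
Proof. by apply/ffunP => i; rewrite !ffunE addbb. Qed.

Lemma badd_inj x : injective (badd x).
Proof. exact: can_inj (baddK x). Qed.

Lemma badd_eq0 x y : (badd x y == bzero n) = (x == y).
Proof. by apply/eqP/eqP => [h|->]; [rewrite -(baddK x y) h badd0 | rewrite baddxx]. Qed.

Lemma hdistE x y : hdist x y = #|supp (badd x y)|.
Proof. by apply: eq_card => i; rewrite !inE ffunE; case: (x i); case: (y i). Qed.

Lemma hdist_le x y : (hdist x y <= n)%N.
Proof. by rewrite /hdist -[leqRHS](card_ord n) max_card. Qed.

Lemma bdotE x s : bdot x s = \big[addb/false]_(i < n) (x i && s i).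
Proof.
rewrite /bdot; apply: (big_ind2 (fun m b => odd m = b)) => //.
  by move=> m1 b1 m2 b2 <- <-; rewrite oddD.
by move=> i _; case: (_ && _).
Qed.

Lemma bdotC x s : bdot x s = bdot s x.
Proof. by rewrite !bdotE; apply: eq_bigr => i _; rewrite andbC. Qed.

Lemma bdotDl x y s : bdot (badd x y) s = bdot x s (+) bdot y s.
Proof.
rewrite !bdotE -big_split /=; apply: eq_bigr => i _; rewrite ffunE.
by case: (x i); case: (y i); case: (s i).
Qed.

Lemma bdotDr x y s : bdot s (badd x y) = bdot s x (+) bdot s y.
Proof. by rewrite bdotC bdotDl -!(bdotC s). Qed.

Lemma bdot0l s : bdot (bzero n) s = false.
Proof. by rewrite bdotE big1 // => i _; rewrite ffunE. Qed.

Lemma bdot_delta i v : bdot (delta i) v = v i.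
Proof.
rewrite bdotE (bigD1 i) //= big1 ?addbF; first by rewrite ffunE eqxx.
by move=> j /negbTE ji; rewrite ffunE ji.
Qed.

Lemma card_bits : #|{: bits n}| = 2 ^ n.
Proof. by rewrite card_ffun card_bool card_ord. Qed.

Lemma subgroupT : subgroup [set: bits n].
Proof. by split => *; rewrite inE. Qed.

Lemma perp_subgroup (S : {set bits n}) : subgroup (perp S).
Proof.
split; first by rewrite inE; apply/forall_inP => s _; rewrite bdot0l.
move=> x y; rewrite !inE => /forall_inP hx /forall_inP hy; apply/forall_inP => s sS.
by rewrite bdotDl (negbTE (hx s sS)) (negbTE (hy s sS)).
Qed.

Lemma Sf_subgroup (f : bits n -> bool) : subgroup (Sf f).
Proof.
split; first by rewrite inE; apply/forallP => x; rewrite badd0.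
move=> z1 z2; rewrite !inE => /forallP h1 /forallP h2; apply/forallP => x.
by rewrite (eqP (h1 x)) (eqP (h2 (badd x z1))) baddA.
Qed.

End BinaryVectors.

(* Only the parity of
   the number of queries to each bit matters for the oracle phase. *)
Definition cnt n k (t : {ffun 'I_k -> 'I_n.+1}) (i : 'I_n) : nat :=
  (\sum_(j < k) (t j == lift ord0 i))%N.

Definition par n k (t : {ffun 'I_k -> 'I_n.+1}) : bits n := [ffun i => odd (cnt t i)].

Lemma sum_lift n (b : 'I_n -> bool) (u : 'I_n.+1) :
  (\sum_(i < n) (b i && (u == lift ord0 i)))%N =
  match unlift ord0 u with Some j => b j | None => false end.
Proof.
case: unliftP => [j ->|->].
  rewrite (bigD1 j) //= eqxx andbT big1 ?addn0 // => i ij.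
  by rewrite (inj_eq (@lift_inj _ ord0)) eq_sym (negbTE ij) andbF.
by rewrite big1 // => i _; rewrite (negbTE (neq_lift _ _)) andbF.
Qed.

Lemma odd_queries n k (x : bits n) (t : {ffun 'I_k -> 'I_n.+1}) :
  odd (\sum_(j < k) xq x (t j)) = bdot x (par t).
Proof.
have -> : (\sum_(j < k) xq x (t j) = \sum_(i < n) x i * cnt t i)%N.
  rewrite (eq_bigr (fun j => \sum_(i < n) (x i && (t j == lift ord0 i))))%N; last first.
    by move=> j _; rewrite sum_lift /xq; case: (unlift _ _).
  rewrite exchange_big /=; apply: eq_bigr => i _.
  by case: (x i); [rewrite mul1n | rewrite mul0n big1].
rewrite /bdot; apply: (big_ind2 (fun m b : nat => odd m = odd b)) => //.
  by move=> m1 b1 m2 b2; rewrite !oddD => -> ->.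
by move=> i _; rewrite oddM ffunE; case: (x i); case: (odd (cnt t i)).
Qed.

Lemma wt_par n k (t : {ffun 'I_k -> 'I_n.+1}) : (#|supp (par t)| <= k)%N.
Proof.
rewrite -sum1_card big_mkcond /=.
apply: (@leq_trans (\sum_(i < n) cnt t i)).
  by apply: leq_sum => i _; rewrite inE ffunE; case: (cnt t i) => [|m] //; case: ifP.
rewrite exchange_big /= -[leqRHS]card_ord -sum1_card.
apply: leq_sum => j _; have := sum_lift (fun=> true) (t j); rewrite /= => ->.
by case: (unlift _ _).
Qed.

(* Conversely, a vector of weight at most K is the parity vector of the query
   string listing its support once (padded with queries to x_0). *)
Definition support_queries n K (v : bits n) : {ffun 'I_K -> 'I_n.+1} :=
  [ffun j : 'I_K => nth ord0 (map (lift ord0) (enum (supp v))) j].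

Lemma par_support_queries n K (v : bits n) :
  (#|supp v| <= K)%N -> par (support_queries K v) = v.
Proof.
move=> hK; apply/ffunP => i; rewrite ffunE.
set s := map (lift ord0) (enum (supp v)).
have hs : (size s <= K)%N by rewrite size_map -cardE.
rewrite /cnt (eq_bigr (fun j : 'I_K => (nth ord0 s j == lift ord0 i) : nat)); last first.
  by move=> j _; rewrite ffunE.
rewrite -(big_mkord xpredT (fun j => (nth ord0 s j == lift ord0 i) : nat)).
(* The padding slots query x_0, never x_i; among the listed slots, x_i occurs
   once if i is in the support and never otherwise. *)
rewrite (@big_cat_nat _ _ _ (size s) 0 K _ _ (leq0n _) hs) /=.
rewrite [X in (_ + X)%N]big1_seq ?addn0; last first.
  move=> j /andP [_]; rewrite mem_index_iota => /andP [hj _].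
  by rewrite nth_default // eq_sym (negbTE (neq_lift _ _)).
rewrite -(big_nth ord0 xpredT (fun u => (u == lift ord0 i) : nat)).
have -> : (\sum_(u <- s) (u == lift ord0 i) = count (pred1 (lift ord0 i)) s)%N.
  by elim: (s) => [|u s' IH]; rewrite ?big_nil // big_cons IH.
rewrite count_map (eq_count (a2 := pred1 i)); last first.
  by move=> u /=; rewrite (inj_eq (@lift_inj _ ord0)).
by rewrite count_uniq_mem ?enum_uniq // mem_enum inE oddb.
Qed.

Local Open Scope ring_scope.

Section Characters.
Variables (C : numClosedFieldType) (n : nat).

Lemma char_sum (H : {set bits n}) (y : bits n) : subgroup H ->
  \sum_(h in H) ((-1) ^+ bdot y h : C) =
  if [forall h in H, ~~ bdot y h] then #|H|%:R else 0.
Proof.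
move=> [H0 HD]; case: ifP => [/forall_inP hf|/negbT].
  by rewrite -sum1_card natr_sum; apply: eq_bigr => h hH; rewrite (negbTE (hf h hH)).
rewrite negb_forall_in => /exists_inP [h0 h0H /negPn yh0].
(* Translating by h0 permutes H and flips the sign of every term. *)
have sum_opp : \sum_(h in H) ((-1) ^+ bdot y h : C) = - \sum_(h in H) (-1) ^+ bdot y h.
  rewrite {1}(reindex_inj (@badd_inj _ h0)) /= -sumrN.
  apply: eq_big => h.
    apply/idP/idP => [/(HD _ _ h0H)|hH]; last exact: HD.
    by rewrite baddK.
  by move=> _; rewrite bdotDr yh0 signr_addb expr1 mulN1r.
move/eqP: sum_opp; rewrite -subr_eq0 opprK -mulr2n -mulr_natr mulf_eq0 pnatr_eq0 orbF.
by move/eqP.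
Qed.

Lemma char_sumT (v : bits n) :
  \sum_(z : bits n) ((-1) ^+ bdot z v : C) = if v == bzero n then (2 ^ n)%:R else 0.
Proof.
have := char_sum v (subgroupT n).
rewrite (eq_bigl xpredT) => [|z]; last by rewrite inE.
under eq_bigr do rewrite bdotC.
move=> ->; case: (v =P bzero n) => [->|nv].
  by rewrite ifT ?cardsT ?card_bits //; apply/forall_inP => h _; rewrite bdot0l.
rewrite ifF //; apply/negbTE/forall_inP => hf; apply: nv; apply/ffunP => i.
by rewrite ffunE -bdot_delta bdotC; apply/negbTE/hf; rewrite inE.
Qed.

Lemma subgroup_card_neq0 (H : {set bits n}) : subgroup H -> #|H|%:R != 0 :> C.
Proof. by case=> H0 _; rewrite pnatr_eq0 -lt0n card_gt0; apply/set0Pn; exists (bzero n). Qed.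

End Characters.

(* |S| |S^perp| = 2^n, by counting the double character sum in two ways. *)
Lemma card_perp n (S : {set bits n}) : subgroup S -> (#|S| * #|perp S| = 2 ^ n)%N.
Proof.
move=> sgS; apply/eqP; rewrite -(@eqr_nat algC) natrM; apply/eqP.
pose F (y s : bits n) : algC := (-1) ^+ bdot y s.
have by_y : \sum_(y : bits n) \sum_(s in S) F y s = (#|S| * #|perp S|)%:R.
  rewrite (eq_bigr (fun y => if y \in perp S then #|S|%:R else 0)); last first.
    by move=> y _; rewrite char_sum // inE.
  by rewrite -big_mkcond /= sumr_const natrM mulr_natr.
have by_s : \sum_(y : bits n) \sum_(s in S) F y s = (2 ^ n)%:R.
  rewrite exchange_big /= (bigD1 (bzero n)) ?sgS.1 //= char_sumT eqxx big1 ?addr0 //.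
  by move=> s /andP [_ /negbTE ns]; rewrite char_sumT ns.
by rewrite -natrM -by_y by_s.
Qed.

Lemma perp_perp n (S : {set bits n}) : subgroup S -> perp (perp S) = S.
Proof.
move=> sgS; apply/esym/eqP; rewrite eqEcard; apply/andP; split.
  apply/subsetP => s sS; rewrite inE; apply/forall_inP => y; rewrite inE.
  by move/forall_inP => /(_ s sS); rewrite bdotC.
have := card_perp sgS; have := card_perp (perp_subgroup S).
move=> <- /eqP; rewrite mulnC eqn_mul2l => /orP [|/eqP -> //].
by rewrite cards_eq0 => /eqP P0; move: (perp_subgroup S).1; rewrite P0 inE.
Qed.

Section Measurements.
Variables (C : numClosedFieldType) (T : finType).
Implicit Types (P : T -> T -> C) (u v : T -> C).

Definition cdot u v : C := \sum_(t : T) (u t)^* * v t.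

Definition apply_op P v (c : T) : C := \sum_(b : T) P c b * v b.

Lemma conj_apply_op P v c :
  orth_projector P -> (apply_op P v c)^* = \sum_(a : T) (v a)^* * P a c.
Proof.
move=> [hP _]; rewrite /apply_op rmorph_sum; apply: eq_bigr => a _.
by rewrite rmorphM /= -hP mulrC.
Qed.

Lemma prob1_norm P v :
  orth_projector P -> prob1 P v = \sum_(c : T) apply_op P v c * (apply_op P v c)^*.
Proof.
move=> hPP; have [_ hI] := hPP.
transitivity (\sum_(a : T) \sum_(b : T) \sum_(c : T) (v a)^* * P a c * (P c b * v b)).
  apply: eq_bigr => a _; apply: eq_bigr => b _.
  by rewrite -hI mulr_sumr mulr_suml; apply: eq_bigr => c _; ring.
symmetry; under eq_bigr do rewrite conj_apply_op // mulr_sumr.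
rewrite exchange_big /=; apply: eq_bigr => a _.
under eq_bigr do rewrite /apply_op mulr_suml.
by rewrite exchange_big /=; apply: eq_bigr => b _; apply: eq_bigr => c _; ring.
Qed.

Lemma prob1_eq0 P v : orth_projector P -> prob1 P v = 0 -> forall c, apply_op P v c = 0.
Proof.
move=> hPP; rewrite prob1_norm // => h0 c; apply/eqP; rewrite -mul_conjC_eq0.
by apply/eqP; apply: (psumr_eq0P _ h0) => // i _; apply: mul_conjC_ge0.
Qed.

Lemma sum_delta_l (a : T) (F : T -> C) : \sum_(c : T) (a == c)%:R * F c = F a.
Proof.
rewrite (bigD1 a) //= eqxx mul1r big1 ?addr0 // => c /negbTE ca.
by rewrite eq_sym ca mul0r.
Qed.

Lemma sum_delta_r (b : T) (F : T -> C) : \sum_(c : T) F c * (c == b)%:R = F b.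
Proof.
rewrite (bigD1 b) //= eqxx mulr1 big1 ?addr0 // => c /negbTE cb.
by rewrite cb mulr0.
Qed.

Definition compl_op P (a b : T) : C := (a == b)%:R - P a b.

Lemma compl_projector P : orth_projector P -> orth_projector (compl_op P).
Proof.
move=> [hP hI]; split=> a b; rewrite /compl_op.
  by rewrite rmorphB /= -hP rmorph_nat eq_sym.
under eq_bigr do rewrite mulrBl !mulrBr.
rewrite !sumrB hI sum_delta_l sum_delta_r sum_delta_l; ring.
Qed.

Lemma prob1_compl P v : prob1 (compl_op P) v = cdot v v - prob1 P v.
Proof.
rewrite /prob1 /cdot -sumrB; apply: eq_bigr => a _.
under eq_bigr do rewrite /compl_op mulrBr mulrBl.
rewrite sumrB; congr (_ - _).
by under eq_bigr do rewrite -mulrA; rewrite -mulr_sumr sum_delta_l.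
Qed.

(* A state giving outcome 0 surely is orthogonal to a unit state giving
   outcome 1 surely: this is why exact algorithms need orthogonal states. *)
Lemma exact_outcomes_orthogonal P u v :
  orth_projector P -> prob1 P u = 0 -> prob1 P v = 1 -> cdot v v = 1 -> cdot u v = 0.
Proof.
move=> hPP pu pv nv.
have v0 : prob1 (compl_op P) v = 0 by rewrite prob1_compl nv pv subrr.
have Pv_eq c : v c = apply_op P v c.
  have := prob1_eq0 (compl_projector hPP) v0 c.
  rewrite /apply_op /compl_op; under eq_bigr do rewrite mulrBl.
  by rewrite sumrB sum_delta_l => /eqP; rewrite subr_eq0 => /eqP.
rewrite /cdot; under eq_bigr do rewrite Pv_eq /apply_op mulr_sumr.
rewrite exchange_big /=; apply: big1 => b _.
under eq_bigr do rewrite mulrA.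
by rewrite -mulr_suml -conj_apply_op // prob1_eq0 // rmorph0 mul0r.
Qed.

End Measurements.

Section OracleStates.
Variables (C : numClosedFieldType) (n k w : nat) (psi : basis n k w -> C).
Implicit Types (x y z v : bits n) (t : basis n k w).

Definition sqamp t : C := psi t * (psi t)^*.

Definition parity_char z : C := \sum_t sqamp t * (-1) ^+ bdot z (par t.1).

Definition parity_mass v : C := \sum_t sqamp t * (par t.1 == v)%:R.

Lemma apply_oracleE x t : apply_oracle x psi t = (-1) ^+ bdot x (par t.1) * psi t.
Proof. by rewrite /apply_oracle -signr_odd odd_queries. Qed.

Lemma oracle_inner x y :
  cdot (apply_oracle y psi) (apply_oracle x psi) = parity_char (badd x y).
Proof.
apply: eq_bigr => t _; rewrite !apply_oracleE rmorphM /= rmorph_sign bdotDl signr_addb.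
by rewrite /sqamp; ring.
Qed.

Lemma oracle_norm x : unit_state psi -> cdot (apply_oracle x psi) (apply_oracle x psi) = 1.
Proof.
move=> psi1; rewrite oracle_inner baddxx -psi1; apply: eq_bigr => t _.
by rewrite bdot0l mulr1.
Qed.

(* If the characteristic function vanishes off a subgroup S, then inverting
   the Fourier transform shows that the parity distribution is invariant under
   translations by S^perp. *)
Section Support.
Variable S : {set bits n}.
Hypothesis char_supp : forall z, z \notin S -> parity_char z = 0.

Lemma parity_mass_fourier v :
  \sum_(z in S) parity_char z * (-1) ^+ bdot z v = (2 ^ n)%:R * parity_mass v.
Proof.
rewrite big_mkcond /= (eq_bigr (fun z => parity_char z * (-1) ^+ bdot z v)); last first.
  by move=> z _; case: ifP => // /negbT /char_supp ->; rewrite mul0r.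
under eq_bigr do rewrite mulr_suml.
rewrite exchange_big /= mulr_sumr; apply: eq_bigr => t _.
under eq_bigr do rewrite -mulrA -signr_addb -bdotDr.
by rewrite -mulr_sumr char_sumT badd_eq0; case: (_ == _); rewrite ?mulr1 ?mulr0 ?mulr0n // mulrC.
Qed.

(* Translation by y in S^perp does not change any character of S. *)
Lemma parity_mass_shift v y : y \in perp S -> parity_mass (badd v y) = parity_mass v.
Proof.
rewrite inE => /forall_inP hy.
have : (2 ^ n)%:R * parity_mass (badd v y) = (2 ^ n)%:R * parity_mass v :> C.
  rewrite -!parity_mass_fourier; apply: eq_bigr => z zS.
  by rewrite bdotDr (bdotC z y) (negbTE (hy z zS)) addbF.
by move/mulfI; apply; rewrite pnatr_eq0 expn_eq0.
Qed.

End Support.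

Lemma parity_mass_nonzero : unit_state psi -> exists a, parity_mass a != 0.
Proof.
move=> psi1; have [t0 nz_t0] : exists t0, sqamp t0 != 0.
  apply/existsP; apply: contraT; rewrite negb_exists => /forallP all0.
  move: psi1; rewrite /unit_state big1 => [/esym/eqP|t _]; first by rewrite oner_eq0.
  by apply/eqP; rewrite -[_ == _]negbK all0.
exists (par t0.1); apply/eqP => mass0.
have := psumr_eq0P (fun t _ => mulr_ge0 (mul_conjC_ge0 (psi t)) (ler0n _ _)) mass0 (i := t0) isT.
by rewrite eqxx mulr1 => /eqP; rewrite (negbTE nz_t0).
Qed.

Lemma parity_mass_witness v : parity_mass v != 0 -> exists t, par t.1 = v.
Proof.
case: (pickP (fun t => par t.1 == v)) => [t /eqP <-|none]; first by exists t.
by rewrite /parity_mass big1 ?eqxx // => t _; rewrite none mulr0.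
Qed.

End OracleStates.

Lemma bigmin_le (I : finType) (m : nat) (F : I -> nat) (a : I) :
  (\big[minn/m]_(x : I) F x <= F a)%N.
Proof.
have : a \in index_enum I by rewrite mem_index_enum.
elim: (index_enum _) => [//|x r IH]; rewrite inE big_cons => /orP [/eqP ->|ar].
  exact: geq_minl.
exact: leq_trans (geq_minr _ _) (IH ar).
Qed.

Lemma minmax_dist_le n (S : {set bits n}) (a : bits n) :
  (minmax_dist S <= \max_(y in perp S) hdist a y)%N.
Proof. exact: bigmin_le. Qed.

Lemma minmax_dist_attained n (S : {set bits n}) :
  exists a, minmax_dist S = \max_(y in perp S) hdist a y.
Proof.
pose R a := \max_(y in perp S) hdist a y.
have R_le a : (R a <= n)%N by apply/bigmax_leqP => y _; apply: hdist_le.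
exists [arg min_(a < bzero n) R a]; case: arg_minnP => // a _ a_min.
apply/eqP; rewrite eqn_leq minmax_dist_le /minmax_dist.
apply: (big_ind (fun m => R a <= m)%N) => // m1 m2 le1 le2.
by rewrite leq_min le1.
Qed.

(* Lower bound: an exact nonadaptive algorithm with k queries is supported on
   query strings whose parity vectors fill a whole coset a + S_f^perp; each of
   them has weight at most k, so every codeword is within distance k of a. *)
Section LowerBound.
Variables (C : numClosedFieldType) (n k w : nat) (f : bits n -> bool).
Variables (psi : basis n k w -> C) (P : basis n k w -> basis n k w -> C).
Hypotheses (psi_unit : unit_state psi) (P_proj : orth_projector P).
Hypothesis exact : forall x, prob1 P (apply_oracle x psi) = (f x)%:R.

(* Inputs x and x + z with f x != f (x + z) yield orthogonal oracle states. *)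
Lemma parity_char_Sf z : z \notin Sf f -> parity_char psi z = 0.
Proof.
rewrite inE negb_forall => /existsP [x /negP fx_neq].
have xz_x : badd x (badd x z) = z by rewrite baddK.
have := exact x; have := exact (badd x z).
case: (f x) fx_neq; case: (f (badd x z)) => // _ p_xz p_x.
  by rewrite -xz_x -oracle_inner (exact_outcomes_orthogonal P_proj p_xz p_x) ?oracle_norm.
by rewrite -xz_x baddC -oracle_inner (exact_outcomes_orthogonal P_proj p_x p_xz) ?oracle_norm.
Qed.

(* Centred at a parity vector a of positive probability, the whole coset
   a + S_f^perp consists of parity vectors of k-query strings. *)
Lemma query_lower_bound : (minmax_dist (Sf f) <= k)%N.
Proof.
have [a mass_a] := parity_mass_nonzero psi_unit.
apply: leq_trans (minmax_dist_le _ a) _; apply/bigmax_leqP => y yY.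
have : parity_mass psi (badd a y) != 0 by rewrite (parity_mass_shift parity_char_Sf).
move=> /parity_mass_witness [t par_t].
by rewrite hdistE -par_t wt_par.
Qed.

End LowerBound.

Lemma coset_sum (C : numClosedFieldType) n (f : bits n -> bool) (S : {set bits n})
    (z : bits n) (G : bits n -> C) :
  S \subset Sf f ->
  \sum_(x | f x) (if badd z x \in S then G x else 0) =
  (f z)%:R * \sum_(u in S) G (badd z u).
Proof.
move=> /subsetP S_Sf; rewrite big_mkcond /= (reindex_inj (@badd_inj _ z)) /= mulr_sumr.
rewrite [RHS]big_mkcond /=; apply: eq_bigr => u _; rewrite baddK.
case uS : (u \in S); last by case: (f _); rewrite ?mulr0.
move: (S_Sf u uS); rewrite inE => /forallP /(_ z) /eqP <-.
by case: (f z); rewrite ?mul1r ?mul0r.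
Qed.

Lemma sign_sq (C : numClosedFieldType) (b : bool) : ((-1) ^+ b : C) * (-1) ^+ b = 1.
Proof. by rewrite -signr_addb addbb. Qed.

(* Measuring a family of states phi_x that are orthonormal across the cosets of
   S and equal up to a character sign inside each coset: projecting onto the
   span of the phi_x with f x = 1 computes f exactly. *)
Section CosetMeasurement.
Variables (C : numClosedFieldType) (T : finType) (n : nat) (f : bits n -> bool).
Variables (S : {set bits n}) (a : bits n) (phi : bits n -> T -> C).
Hypotheses (S_grp : subgroup S) (S_Sf : S \subset Sf f).
Hypothesis phi_gram : forall x y,
  cdot (phi y) (phi x) = if badd x y \in S then (-1) ^+ bdot (badd x y) a else 0.
Hypothesis phi_shift : forall x u t, u \in S -> phi (badd x u) t = (-1) ^+ bdot u a * phi x t.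

Definition coset_proj (b c : T) : C := #|S|%:R^-1 * \sum_(x | f x) phi x b * (phi x c)^*.

Lemma coset_proj_projector : orth_projector coset_proj.
Proof.
split=> b c; rewrite /coset_proj.
  rewrite rmorphM /= fmorphV rmorph_nat rmorph_sum; congr (_ * _); apply: eq_bigr => x _.
  by rewrite rmorphM /= conjCK mulrC.
transitivity (#|S|%:R^-1 * #|S|%:R^-1 * \sum_(x | f x) \sum_(x' | f x')
    phi x b * (phi x' c)^* * cdot (phi x) (phi x')).
  under eq_bigr do rewrite mulrACA big_distrlr /=.
  rewrite -mulr_sumr; congr (_ * _); rewrite exchange_big /=; apply: eq_bigr => x _.
  rewrite exchange_big /=; apply: eq_bigr => x' _; rewrite /cdot mulr_sumr.
  by apply: eq_bigr => d _; ring.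
(* Only x' in the coset x + S contribute, each as much as x' = x. *)
have coset_term x : f x -> \sum_(x' | f x') phi x b * (phi x' c)^* * cdot (phi x) (phi x')
    = #|S|%:R * (phi x b * (phi x c)^*).
  move=> fx; under eq_bigr => x' _ do rewrite phi_gram baddC (fun_if (GRing.mul _)) mulr0.
  rewrite coset_sum // fx mul1r mulr_natl -sumr_const; apply: eq_bigr => u uS.
  rewrite baddK phi_shift // rmorphM /= rmorph_sign.
  set s := (-1) ^+ _; have s2 : s * s = 1 by apply: sign_sq.
  by rewrite -[RHS]mulr1 -s2; ring.
rewrite (eq_bigr _ coset_term) -mulr_sumr mulrA -(mulrA _ _ #|S|%:R).
by rewrite mulVf ?subgroup_card_neq0 // mulr1.
Qed.

Lemma coset_proj_prob z : prob1 coset_proj (phi z) = (f z)%:R.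
Proof.
have gram2 x : cdot (phi z) (phi x) * cdot (phi x) (phi z) = if badd z x \in S then 1 else 0.
  by rewrite !phi_gram [badd x z]baddC; case: ifP => _; rewrite ?mul0r ?sign_sq.
transitivity (#|S|%:R^-1 * \sum_(x | f x) cdot (phi z) (phi x) * cdot (phi x) (phi z)).
  transitivity (\sum_b \sum_c \sum_(x | f x)
      #|S|%:R^-1 * ((phi z b)^* * phi x b * ((phi x c)^* * phi z c))).
    apply: eq_bigr => b _; apply: eq_bigr => c _.
    by rewrite /coset_proj mulr_sumr mulr_sumr mulr_suml; apply: eq_bigr => x _; ring.
  under eq_bigr do rewrite exchange_big /=.
  rewrite exchange_big /= mulr_sumr; apply: eq_bigr => x _.
  rewrite /cdot big_distrlr /= mulr_sumr; apply: eq_bigr => b _.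
  by rewrite mulr_sumr.
rewrite (eq_bigr _ (fun x _ => gram2 x)) coset_sum // sumr_const -mulr_natl mulr1.
by rewrite mulrCA mulVf ?subgroup_card_neq0 // mulr1.
Qed.

End CosetMeasurement.

Section CosetState.
Variables (C : numClosedFieldType) (n K : nat) (Y : {set bits n}) (a : bits n).
Hypothesis Y_grp : subgroup Y.
Hypothesis coset_wt : forall y, y \in Y -> (#|supp (badd a y)| <= K)%N.

Definition coset_query (y : bits n) : basis n K 1 := (support_queries K (badd a y), ord0).

Definition coset_state (t : basis n K 1) : C :=
  sqrtC (#|Y|%:R^-1) * (t \in coset_query @: Y)%:R.

Lemma par_coset_query y : y \in Y -> par (coset_query y).1 = badd a y.
Proof. by move=> yY; apply: par_support_queries; apply: coset_wt. Qed.

(* The parity distribution of the coset state is uniform on a + Y, so its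
   Fourier transform is a character supported on Y^perp. *)
Lemma coset_state_char z :
  parity_char coset_state z = if z \in perp Y then (-1) ^+ bdot z a else 0.
Proof.
have Y_neq0 : #|Y|%:R != 0 :> C := subgroup_card_neq0 C Y_grp.
have query_inj : {in Y &, injective coset_query}.
  move=> y1 y2 y1Y y2Y /(congr1 (fun t => par t.1)).
  by rewrite /= !par_coset_query // => /badd_inj.
have sqamp_coset t : sqamp coset_state t = #|Y|%:R^-1 * (t \in coset_query @: Y)%:R.
  rewrite /sqamp /coset_state rmorphM rmorph_nat /= mulrACA -natrM mulnb andbb.
  rewrite conj_Creal ?sqrtC_real ?invr_ge0 ?ler0n // -expr2 sqrtCK //.
rewrite /parity_char (eq_bigr _ (fun t _ => congr1 (GRing.mul^~ _) (sqamp_coset t))).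
under eq_bigr do rewrite -mulrA.
rewrite -mulr_sumr; under eq_bigr do rewrite mulr_natl mulrb.
rewrite -big_mkcond /= big_imset //=.
under eq_bigr => y yY do rewrite par_coset_query // bdotDr signr_addb.
rewrite -mulr_sumr char_sum // [in RHS]inE.
by case: ifP => _; rewrite ?mulr0 // mulrCA mulVf // mulr1.
Qed.

(* The coset state is a unit vector (the value at z = 0 above). *)
Lemma coset_state_unit : unit_state coset_state.
Proof.
rewrite /unit_state; have := coset_state_char (bzero n).
rewrite (perp_subgroup Y).1 bdot0l expr0 => <-.
by apply: eq_bigr => t _; rewrite bdot0l expr0 mulr1.
Qed.

Lemma coset_state_shift x u t : u \in perp Y ->
  apply_oracle (badd x u) coset_state t = (-1) ^+ bdot u a * apply_oracle x coset_state t.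
Proof.
rewrite inE => /forall_inP uY; rewrite !apply_oracleE /coset_state.
case: (boolP (t \in coset_query @: Y)) => [/imsetP [y yY ->]|_]; last by rewrite !mulr0.
rewrite par_coset_query // bdotDl !bdotDr (negbTE (uY y yY)) addbF signr_addb.
by rewrite -mulrA mulrCA.
Qed.

End CosetState.

(* Upper bound: centre the coset state of S_f^perp at a point a realizing the
   covering radius K, and measure with the coset projector of S_f. *)
Lemma query_upper_bound (C : numClosedFieldType) n (f : bits n -> bool) :
  na_exact C f (minmax_dist (Sf f)).
Proof.
set S := Sf f.
have [a K_radius] := minmax_dist_attained S.
have S_grp : subgroup S := Sf_subgroup f.
have perp_perp_S : perp (perp S) = S := perp_perp S_grp.
have coset_wt y : y \in perp S -> (#|supp (badd a y)| <= minmax_dist S)%N.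
  by move=> yS; rewrite -hdistE K_radius (leq_bigmax_cond _ yS).
pose psi := @coset_state C n (minmax_dist S) (perp S) a.
pose phi x := apply_oracle x psi.
have phi_gram x y :
    cdot (phi y) (phi x) = if badd x y \in S then (-1) ^+ bdot (badd x y) a else 0.
  by rewrite oracle_inner (coset_state_char _ (perp_subgroup S) coset_wt) perp_perp_S.
have phi_shift x u t : u \in S -> phi (badd x u) t = (-1) ^+ bdot u a * phi x t.
  by rewrite -{1}perp_perp_S; apply: coset_state_shift.
exists 1%N, psi, (coset_proj f S phi).
split; first exact: coset_state_unit (perp_subgroup S) coset_wt.
split; first exact: coset_proj_projector S_grp (subxx S) phi_gram phi_shift.
by move=> x; exact: (coset_proj_prob S_grp (subxx S) phi_gram x).
Qed.

Theorem theorem7p2 (C : numClosedFieldType) (n : nat) (f : bits n -> bool) :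
  na_exact C f (minmax_dist (Sf f)) /\
  (forall k : nat, na_exact C f k -> (minmax_dist (Sf f) <= k)%N).
Proof.
split; first exact: query_upper_bound.
by move=> k [w [psi [P [psi_unit [P_proj exact]]]]]; apply: query_lower_bound exact.
Qed.
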